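(* Let $p$ be a prime and $n, k$ positive integers, $d = \gcd(n,k)$, and suppose $p \nmid \frac{k}{d}$. Let $L(X) = \sum_{i=0}^t \alpha_i X^{p^i}$, $\alpha_i \in \mathbb{F}_p$, be a $p$-linearized polynomial without multiple roots, and let $L'$ be a $p$-linearized polynomial over $\mathbb{F}_p$ with $X - X^{p^k} = L \circ L'(X)$. Let $a \in \mathbb{F}_{p^n}$ and let $\delta$ be any element of $\mathbb{F}_{p^{2n}}$ with $S_n^{2n}(\delta) = 1$. Then the equation $L(X) = a$ has a solution in $\mathbb{F}_{p^n}$ if and only if $L' \circ T_d^n(a) = 0$. Moreover, $$x_0 = \frac{d}{k} \cdot L' \circ T_k^{[n,k]}(\delta \cdot a)$$ is a solution of $L(X) = a$, and it belongs to $\mathbb{F}_{p^n}$ under the condition $L' \circ T_d^n(a) = 0$.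
   Context: For positive integers $l \mid m$ define $T_l^m(X) = \sum_{i=0}^{m/l - 1} X^{p^{li}}$ and $S_l^m(X) = \sum_{i=0}^{m/l-1} (-1)^i X^{p^{li}}$; in particular $S_n^{2n}(X) = X - X^{p^n}$. $[n,k]$ denotes the least common multiple of $n$ and $k$. Since $p \nmid k/d$, $\frac{d}{k}$ denotes the inverse of $\frac{k}{d}$ in $\mathbb{F}_p$. $\circ$ denotes composition. *)

From HB Require Import structures.
From mathcomp Require Import all_boot all_order all_algebra.
From mathcomp Require Import all_field.
Set Implicit Arguments. Unset Strict Implicit. Unset Printing Implicit Defensive.
Import GRing.Theory.
Local Open Scope ring_scope.

Definition linp (F : fieldType) (p : nat) (c : seq F) : {poly F} :=
  \sum_(i < size c) c`_i *: 'X^(p ^ i).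

Definition Tr (F : fieldType) (p l m : nat) (x : F) : F :=
  \sum_(i < m %/ l) x ^+ (p ^ (l * i)).

Definition Sr (F : fieldType) (p l m : nat) (x : F) : F :=
  \sum_(i < m %/ l) (-1) ^+ i * x ^+ (p ^ (l * i)).

Definition in_Fp (F : fieldType) (p : nat) (x : F) : bool := x ^+ p == x.

From mathcomp Require Import all_boot all_order all_algebra.
From mathcomp Require Import all_field.
Set Implicit Arguments. Unset Strict Implicit.
Import GRing.Theory.
Local Open Scope ring_scope.

(* Write d = gcd(n, k), n = N d and k = m d, so that m and N are coprime and
   p does not divide m.  Linearized polynomials over F_p commute with each other
   and with Frobenius, and L (L' y) = y - y^(p^k).
   If L x = a with x in F_(p^n), then L' (T_d^n a) = L' (L (T_d^n x))
   = T_d^n x - (T_d^n x)^(p^k) = 0, because T_d^n x lies in F_(p^d).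
   Conversely, pick delta with delta^(p^n) = delta - 1 and put
   T = T_k^[n,k] (delta a).  The sum T - T^(p^k) telescopes to
   delta a - (delta a)^(p^(mn)) = m a, so x0 = m^-1 L' T solves L x0 = a.
   Moreover T^(p^n) = T - T_k^[n,k] a = T - T_d^n a, since i |-> m i permutes
   Z/N; hence x0 is in F_(p^n) as soon as L' (T_d^n a) = 0. *)

Section PowerPeriod.
Variables (R : pzSemiRingType) (p : nat).

Lemma exprpXM_id (x : R) n e : x ^+ (p ^ n) = x -> x ^+ (p ^ (n * e)) = x.
Proof.
move=> xE; elim: e => [|e IHe]; first by rewrite muln0 expn0 expr1.
by rewrite mulnS expnD mulnC exprM IHe xE.
Qed.

Lemma exprpX_id j (c : R) : c ^+ p = c -> c ^+ (p ^ j) = c.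
Proof. by rewrite -{2}(expn1 p) => cE; rewrite -(mul1n j) exprpXM_id. Qed.

Lemma exprpX_mod (x : R) n e : x ^+ (p ^ n) = x -> x ^+ (p ^ e) = x ^+ (p ^ (e %% n)).
Proof. by move=> xE; rewrite {1}(divn_eq e n) expnD exprM mulnC exprpXM_id. Qed.

End PowerPeriod.

Section PcharPowers.
Variables (R : comNzRingType) (p : nat).
Hypothesis pcharRp : p \in [pchar R].

Lemma pcharf_natX j : [pchar R].-nat (p ^ j)%N.
Proof. by rewrite pnatX (pnatE _ (pcharf_prime pcharRp)) pcharRp. Qed.

Lemma exprD_pcharX j (x y : R) : (x + y) ^+ (p ^ j) = x ^+ (p ^ j) + y ^+ (p ^ j).
Proof. exact: exprDn_pchar (pcharf_natX j). Qed.

Lemma exprB_pcharX j (x y : R) : (x - y) ^+ (p ^ j) = x ^+ (p ^ j) - y ^+ (p ^ j).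
Proof. by rewrite exprD_pcharX exprNn_pchar ?pcharf_natX. Qed.

Lemma expr0_pcharX j : (0 : R) ^+ (p ^ j) = 0.
Proof. by rewrite expr0n expn_eq0 eqn0Ngt (prime_gt0 (pcharf_prime pcharRp)). Qed.

Lemma expr_sum_pcharX j I (r : seq I) (P : pred I) (G : I -> R) :
  (\sum_(i <- r | P i) G i) ^+ (p ^ j) = \sum_(i <- r | P i) G i ^+ (p ^ j).
Proof. exact: (big_morph _ (exprD_pcharX j) (expr0_pcharX j)). Qed.

Lemma natr_exprp m : (m%:R : R) ^+ p = m%:R.
Proof. by rewrite -(pFrobenius_autE pcharRp) pFrobenius_aut_nat. Qed.

Lemma exprpXM_shift (delta : R) n e :
  delta ^+ (p ^ n) = delta - 1 -> delta ^+ (p ^ (n * e)) = delta - e%:R.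
Proof.
move=> deltaE; elim: e => [|e IHe]; first by rewrite muln0 expn0 expr1 subr0.
rewrite mulnS expnD mulnC exprM IHe exprB_pcharX (exprpX_id _ (natr_exprp e)) deltaE.
by rewrite mulrSr opprD addrA addrAC.
Qed.

End PcharPowers.

Section Linearized.
Variables (F : fieldType) (p : nat).
Hypothesis pcharFp : p \in [pchar F].
Implicit Types (c : seq F) (x y : F).

Lemma horner_linp c x : (linp p c).[x] = \sum_(i < size c) c`_i * x ^+ (p ^ i).
Proof. by rewrite horner_sum; apply: eq_bigr => i _; rewrite hornerZ hornerXn. Qed.

Lemma in_Fp_nth c i : all (in_Fp p) c -> c`_i ^+ p = c`_i.
Proof.
move=> /allP c_Fp; have [lt_i_c | le_c_i] := ltnP i (size c).
  by apply/eqP/c_Fp; rewrite mem_nth.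
by rewrite nth_default // expr0n eqn0Ngt (prime_gt0 (pcharf_prime pcharFp)).
Qed.

Lemma horner_linpD c x y : (linp p c).[x + y] = (linp p c).[x] + (linp p c).[y].
Proof.
by rewrite !horner_linp -big_split; apply: eq_bigr => i _; rewrite exprD_pcharX // mulrDr.
Qed.

Lemma horner_linpB c x y : (linp p c).[x - y] = (linp p c).[x] - (linp p c).[y].
Proof.
by rewrite !horner_linp -sumrB; apply: eq_bigr => i _; rewrite exprB_pcharX // mulrBr.
Qed.

Lemma horner_linp0 c : (linp p c).[0] = 0.
Proof. by rewrite horner_linp big1 // => i _; rewrite expr0_pcharX // mulr0. Qed.

Lemma horner_linp_sum c I (r : seq I) (P : pred I) (G : I -> F) :
  (linp p c).[\sum_(i <- r | P i) G i] = \sum_(i <- r | P i) (linp p c).[G i].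
Proof. exact: (big_morph _ (horner_linpD c) (horner_linp0 c)). Qed.

Lemma horner_linpZ c b x : b ^+ p = b -> (linp p c).[b * x] = b * (linp p c).[x].
Proof.
move=> bE; rewrite !horner_linp mulr_sumr; apply: eq_bigr => i _.
by rewrite exprMn (exprpX_id _ bE) mulrCA.
Qed.

Lemma horner_linp_exprpX c x j : all (in_Fp p) c ->
  (linp p c).[x] ^+ (p ^ j) = (linp p c).[x ^+ (p ^ j)].
Proof.
move=> c_Fp; rewrite !horner_linp expr_sum_pcharX //; apply: eq_bigr => i _.
by rewrite exprMn (exprpX_id _ (in_Fp_nth _ c_Fp)) exprAC.
Qed.

Lemma horner_linpC c c' x : all (in_Fp p) c -> all (in_Fp p) c' ->
  (linp p c).[(linp p c').[x]] = (linp p c').[(linp p c).[x]].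
Proof.
have doubleE u v : all (in_Fp p) v -> (linp p u).[(linp p v).[x]] =
    \sum_(i < size u) \sum_(j < size v) u`_i * v`_j * x ^+ (p ^ i * p ^ j).
  move=> v_Fp; rewrite horner_linp; apply: eq_bigr => i _.
  rewrite horner_linp_exprpX // horner_linp mulr_sumr; apply: eq_bigr => j _.
  by rewrite -exprM mulrA mulnC.
move=> c_Fp c'_Fp; rewrite !doubleE // exchange_big.
by apply: eq_bigr => j _; apply: eq_bigr => i _; rewrite mulnC (mulrC c`_i).
Qed.

End Linearized.

Lemma TrE (F : fieldType) p l N (x : F) :
  (0 < l)%N -> Tr p l (N * l) x = \sum_(i < N) x ^+ (p ^ (l * i)).
Proof. by move=> l_gt0; rewrite /Tr mulnK. Qed.

Lemma Sr_double (F : fieldType) p n (x : F) :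
  (0 < n)%N -> Sr p n (2 * n) x = x - x ^+ (p ^ n).
Proof.
move=> n_gt0; rewrite /Sr mulnK // big_ord_recr big_ord1 /=.
by rewrite muln0 muln1 expn0 !expr1 mul1r mulN1r.
Qed.

Section Traces.
Variables (F : fieldType) (p d N : nat).
Hypotheses (pcharFp : p \in [pchar F]) (d_gt0 : (0 < d)%N).

Lemma Tr_exprpX_id (x : F) :
  x ^+ (p ^ (N * d)) = x -> Tr p d (N * d) x ^+ (p ^ d) = Tr p d (N * d) x.
Proof.
move=> xE; rewrite TrE // expr_sum_pcharX //.
under eq_bigr do rewrite -exprM -expnD addnC -mulnS.
case: N xE => [|N'] xE; first by rewrite !big_ord0.
rewrite big_ord_recr big_ord_recl /= mulnC xE muln0 expn0 expr1 addrC.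
by congr (_ + _); apply: eq_bigr.
Qed.

Lemma Tr_coprime m (a : F) :
  (0 < m)%N -> (0 < N)%N -> coprime m N -> a ^+ (p ^ (N * d)) = a ->
  Tr p (m * d) (N * (m * d)) a = Tr p d (N * d) a.
Proof.
move=> m_gt0 N_gt0 coprime_mN aE; rewrite !TrE ?muln_gt0 ?m_gt0 //.
pose h (i : 'I_N) := Ordinal (ltn_pmod (m * i) N_gt0).
have h_inj : injective h.
  move=> i j /(congr1 val) /= /eqP ij_mod; apply/val_inj.
  wlog le_ij : i j ij_mod / (i <= j)%N.
    move=> W; case: (leqP i j) => [|/ltnW] ?; first exact: W.
    by apply/esym/W; rewrite // eq_sym.
  apply/eqP; rewrite eqn_leq le_ij -subn_eq0 /=.
  have : (N %| m * (j - i))%N.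
    by rewrite mulnBr -eqn_mod_dvd ?leq_mul2l ?le_ij ?orbT // eq_sym.
  rewrite Gauss_dvdr 1?coprime_sym // /dvdn modn_small //.
  exact: leq_ltn_trans (leq_subr i j) (ltn_ord j).
rewrite [RHS](reindex_inj h_inj); apply: eq_bigr => i _ /=.
have -> : (d * ((m * i) %% N) = (m * d * i) %% (N * d))%N.
  by rewrite mulnC muln_modl // mulnAC.
by rewrite -(exprpX_mod _ aE).
Qed.

End Traces.

Section LinearizedEquation.
Variables (F : fieldType) (p m d N : nat) (c c' : seq F).
Hypotheses (pcharFp : p \in [pchar F]) (d_gt0 : (0 < d)%N) (N_gt0 : (0 < N)%N).
Hypotheses (c_Fp : all (in_Fp p) c) (c'_Fp : all (in_Fp p) c').
Hypothesis LL' : 'X - 'X^(p ^ (m * d)) = linp p c \Po linp p c'.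

Lemma horner_linp_comp y : (linp p c).[(linp p c').[y]] = y - y ^+ (p ^ (m * d)).
Proof. by rewrite -horner_comp -LL' hornerD hornerN hornerX hornerXn. Qed.

Lemma linp_Tr_linp_eq0 x :
  x ^+ (p ^ (N * d)) = x -> (linp p c').[Tr p d (N * d) (linp p c).[x]] = 0.
Proof.
move=> xE; rewrite TrE //.
under eq_bigr do rewrite horner_linp_exprpX //.
rewrite -horner_linp_sum // -TrE // horner_linpC // horner_linp_comp.
by rewrite (mulnC m) exprpXM_id ?subrr // Tr_exprpX_id.
Qed.

Variables (a delta : F).
Hypotheses (pNdvd_m : ~~ (p %| m)%N) (coprime_mN : coprime m N).
Hypotheses (aE : a ^+ (p ^ (N * d)) = a) (deltaE : delta ^+ (p ^ (N * d)) = delta - 1).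

Let m_gt0 : (0 < m)%N. Proof. by case: m pNdvd_m; rewrite ?dvdn0. Qed.
Let m_neq0 : (m%:R : F) != 0. Proof. by rewrite -(dvdn_pcharf pcharFp). Qed.
Let m_inv_Fp : (m%:R : F)^-1 ^+ p = (m%:R)^-1. Proof. by rewrite exprVn natr_exprp. Qed.

Let T := Tr p (m * d) (N * (m * d)) (delta * a).
Let x0 := (m%:R)^-1 * (linp p c').[T].

Lemma Tr_twisted_sub_exprpX : T - T ^+ (p ^ (m * d)) = m%:R * a.
Proof.
pose u i := (delta * a) ^+ (p ^ (m * d * i)).
rewrite /T TrE ?muln_gt0 ?m_gt0 // expr_sum_pcharX //.
under [X in _ - X]eq_bigr do rewrite -exprM -expnD addnC -mulnS.
rewrite -sumrB (eq_bigr (fun i : 'I_N => - (u i.+1 - u i))); last first.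
  by move=> i _; rewrite opprB.
rewrite sumrN -(big_mkord xpredT (fun i => u i.+1 - u i)) telescope_sumr // opprB.
rewrite /u muln0 expn0 expr1 [(m * d * N)%N]mulnC mulnCA mulnC exprMn.
by rewrite (exprpXM_id _ aE) (exprpXM_shift pcharFp _ deltaE) mulrBl subKr.
Qed.

Lemma Tr_twisted_exprpX : T ^+ (p ^ (N * d)) = T - Tr p d (N * d) a.
Proof.
rewrite -(Tr_coprime d_gt0 m_gt0 N_gt0 coprime_mN aE) /T.
rewrite !TrE ?muln_gt0 ?m_gt0 // expr_sum_pcharX // -sumrB; apply: eq_bigr => i _.
by rewrite exprAC exprMn deltaE aE mulrBl mul1r exprB_pcharX.
Qed.

Lemma horner_linp_x0 : (linp p c).[x0] = a.
Proof. by rewrite horner_linpZ // horner_linp_comp Tr_twisted_sub_exprpX mulKf. Qed.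

Lemma x0_exprpX : (linp p c').[Tr p d (N * d) a] = 0 -> x0 ^+ (p ^ (N * d)) = x0.
Proof.
move=> L'Tr0; rewrite exprMn (exprpX_id _ m_inv_Fp) horner_linp_exprpX //.
by rewrite Tr_twisted_exprpX horner_linpB // L'Tr0 subr0.
Qed.

End LinearizedEquation.

Lemma exists_expr_eq_sub1 (F : closedFieldType) q :
  (1 < q)%N -> exists delta : F, delta ^+ q = delta - 1.
Proof.
case: q => [|[|q]] // _.
have [x xE] := @solve_monicpoly F q.+2 (nth 0 [:: -1; 1]) isT.
exists x; rewrite xE !big_ord_recl big1 /= => [|i _]; last by rewrite nth_nil mul0r.
by rewrite expr0 expr1 mulr1 mul1r addr0 addrC.
Qed.

Lemma linp_solvable_iff (F : closedFieldType) p m d N (c c' : seq F) a :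
  p \in [pchar F] -> (0 < d)%N -> (0 < N)%N ->
  all (in_Fp p) c -> all (in_Fp p) c' ->
  'X - 'X^(p ^ (m * d)) = linp p c \Po linp p c' ->
  ~~ (p %| m)%N -> coprime m N -> a ^+ (p ^ (N * d)) = a ->
  (exists x, x ^+ (p ^ (N * d)) = x /\ (linp p c).[x] = a) <->
  (linp p c').[Tr p d (N * d) a] = 0.
Proof.
move=> pcharFp d_gt0 N_gt0 c_Fp c'_Fp LL' pNdvd_m coprime_mN aE; split.
  by case=> x [xE <-]; exact: (linp_Tr_linp_eq0 pcharFp d_gt0 c_Fp c'_Fp LL' xE).
have [delta deltaE] : exists delta : F, delta ^+ (p ^ (N * d)) = delta - 1.
  apply: exists_expr_eq_sub1.
  by rewrite -(expn0 p) ltn_exp2l ?muln_gt0 ?N_gt0 ?prime_gt1 ?(pcharf_prime pcharFp).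
move=> L'Tr0; eexists; split.
  exact: (x0_exprpX pcharFp d_gt0 N_gt0 c'_Fp pNdvd_m coprime_mN aE deltaE).
exact: (horner_linp_x0 pcharFp d_gt0 LL' pNdvd_m aE deltaE).
Qed.

Lemma gcdn_cofactors n k : (0 < n)%N ->
  exists N m d, [/\ n = N * d, k = m * d, 0 < N, 0 < d & coprime m N]%N.
Proof.
move=> n_gt0; set d := gcdn n k.
have d_gt0 : (0 < d)%N by rewrite gcdn_gt0 n_gt0.
exists (n %/ d)%N, (k %/ d)%N, d; rewrite !divnK ?dvdn_gcdl ?dvdn_gcdr //.
split=> //; first by rewrite divn_gt0 // dvdn_leq ?dvdn_gcdl.
rewrite /coprime -(eqn_pmul2r d_gt0) mul1n muln_gcdl.
by rewrite !divnK ?dvdn_gcdl ?dvdn_gcdr // gcdnC.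
Qed.

Theorem theorem2 (F : closedFieldType) (p n k : nat) (alpha alpha' : seq F) (a : F) :
  prime p -> p \in [pchar F] -> (0 < n)%N -> (0 < k)%N ->
  ~~ (p %| k %/ gcdn n k)%N ->
  all (in_Fp p) alpha -> all (in_Fp p) alpha' ->
  separable_poly (linp p alpha) ->
  'X - 'X^(p ^ k) = linp p alpha \Po linp p alpha' ->
  a ^+ (p ^ n) = a ->
  ((exists x : F, x ^+ (p ^ n) = x /\ (linp p alpha).[x] = a)
     <-> (linp p alpha').[Tr p (gcdn n k) n a] = 0)
  /\
  (forall delta : F, delta ^+ (p ^ (2 * n)) = delta -> Sr p n (2 * n) delta = 1 ->
     let x0 := ((k %/ gcdn n k)%:R)^-1 * (linp p alpha').[Tr p k (lcmn n k) (delta * a)] in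
     (linp p alpha).[x0] = a /\
     ((linp p alpha').[Tr p (gcdn n k) n a] = 0 -> x0 ^+ (p ^ n) = x0)).
Proof.
move=> _ pcharFp n_gt0 _.
have [N [m [d [-> -> N_gt0 d_gt0 coprime_mN]]]] := gcdn_cofactors k n_gt0.
have gcdE : gcdn (N * d) (m * d) = d.
  by rewrite -muln_gcdl gcdnC (eqP coprime_mN) mul1n.
have lcmE : lcmn (N * d) (m * d) = (N * (m * d))%N by rewrite /lcmn gcdE mulnAC mulnK.
rewrite gcdE lcmE mulnK // => pNdvd_m c_Fp c'_Fp _ LL' aE.
split.
  exact: (linp_solvable_iff pcharFp d_gt0 N_gt0 c_Fp c'_Fp LL' pNdvd_m coprime_mN aE).
move=> delta _; rewrite Sr_double ?muln_gt0 ?N_gt0 // => SE x0.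
have deltaE : delta ^+ (p ^ (N * d)) = delta - 1 by rewrite -SE subKr.
split; first exact: (horner_linp_x0 pcharFp d_gt0 LL' pNdvd_m aE deltaE).
exact: (x0_exprpX pcharFp d_gt0 N_gt0 c'_Fp pNdvd_m coprime_mN aE deltaE).
Qed.
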